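(* For every $S\in\{\tfrac12,1,\tfrac32,\dots\}$, every $L\in\mathbb N$ and every $\beta>0$, $$\frac{\langle D_L|e^{-\beta H^{(L)}_{\mathrm{AF}}}|D_L\rangle}{\operatorname{tr}e^{-\beta H^{(L)}_{\mathrm{AF}}}}\ \ge\ \frac1{(2S+1)^L}.$$ In particular the seed vector $|D_L\rangle$ has nonzero projection onto the ground-state eigenspace of $H^{(L)}_{\mathrm{AF}}$.
   Context: $\Lambda_L=\{-L+1,\dots,L\}$, $\mathcal H_L=\bigotimes_{v\in\Lambda_L}\mathbb C^{2S+1}$, with $|m\rangle$ ($m=-S,\dots,S$) the eigenbasis of the spin-$S$ operator $S^z$ and $|m,m'\rangle_{u,v}=|m\rangle_u\otimes|m'\rangle_v$. $P^{(0)}_{u,v}=\frac1{2S+1}\sum_{m,m'=-S}^S(-1)^{m-m'}(|m,-m\rangle\langle m',-m'|)_{u,v}$ (the projection onto the singlet of $\mathbf S_u+\mathbf S_v$), $H^{(L)}_{\mathrm{AF}}=-(2S+1)\sum_{u=-L+1}^{L-1}P^{(0)}_{u,u+1}$, and $|D_L\rangle=\bigotimes_{j=1}^L\sum_{m=-S}^S(-1)^m|m,-m\rangle_{-L+2j-1,-L+2j}$. *)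

From Stdlib Require Import Reals Lra Lia Arith.
Open Scope R_scope.

Fixpoint fsum (n : nat) (f : nat -> R) : R :=
  match n with O => 0 | S n' => fsum n' f + f n' end.
Fixpoint fprod (n : nat) (f : nat -> R) : R :=
  match n with O => 1 | S n' => fprod n' f * f n' end.

(* Spin S is encoded by twoS = 2S (a positive natural number); the local
   dimension is d = 2S+1.  The local basis vector |m>, m = -S..S, is encoded by
   the digit k = m + S in {0,..,d-1}; then -m corresponds to d-1-k.
   Sites v in Lambda_L = {-L+1,..,L} are encoded by positions p = v+L-1 in
   {0,..,2L-1}.  A basis vector of H_L (a configuration) is encoded by the
   natural number a < d^(2L) whose base-d digit at position p is the k-value
   at that site. *)
Definition ldim (twoS : nat) : nat := S twoS.
Definition hdim (twoS L : nat) : nat := (ldim twoS ^ (2 * L))%nat.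

Definition digit (d a p : nat) : nat := ((a / d ^ p) mod d)%nat.

Definition ind (b : bool) : R := if b then 1 else 0.

(* Matrix element <a| P^(0)_{u,u+1} |b>, where u+1 has position p+1:
   (1/d) (-1)^(m_a - m_b) if a = |m_a,-m_a>, b = |m_b,-m_b> on (p,p+1)
   and a, b agree elsewhere.  (-1)^(m_a-m_b) = (-1)^(k_a+k_b). *)
Definition Psing (d p a b : nat) : R :=
  / INR d *
  (ind ((a mod d ^ p =? b mod d ^ p)%nat
        && (a / d ^ (p + 2) =? b / d ^ (p + 2))%nat
        && (digit d a (S p) =? d - 1 - digit d a p)%nat
        && (digit d b (S p) =? d - 1 - digit d b p)%nat)
   * (-1) ^ (digit d a p + digit d b p)).

Definition Ham (twoS L : nat) (a b : nat) : R :=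
  - INR (ldim twoS) * fsum (2 * L - 1) (fun p => Psing (ldim twoS) p a b).

(* |D_L> = tensor_{j=1}^L sum_m (-1)^m |m,-m>_{-L+2j-1,-L+2j};
   sites -L+2j-1, -L+2j have positions 2j-2, 2j-1.  The sign (-1)^m is taken
   as (-1)^(m+S) = (-1)^k, which differs by a global phase ((-1)^(-S))^L that
   does not affect <D|X|D>. *)
Definition Dvec (twoS L : nat) (a : nat) : R :=
  let d := ldim twoS in
  fprod L (fun j =>
    ind (digit d a (2 * j + 1) =? d - 1 - digit d a (2 * j))%nat
    * (-1) ^ (digit d a (2 * j))).

Fixpoint matpow (N : nat) (M : nat -> nat -> R) (k : nat) : nat -> nat -> R :=
  match k with
  | O => fun i j => ind (i =? j)%nat
  | S k' => fun i j => fsum N (fun l => matpow N M k' i l * M l j)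
  end.

Definition is_mexp (N : nat) (M : nat -> nat -> R) (E : nat -> nat -> R) : Prop :=
  forall i j, (i < N)%nat -> (j < N)%nat ->
    Un_cv (fun n => sum_f_R0 (fun k => matpow N M k i j / INR (fact k)) n) (E i j).

Definition mapply (N : nat) (M : nat -> nat -> R) (v : nat -> R) (i : nat) : R :=
  fsum N (fun j => M i j * v j).

Definition is_ground_energy (N : nat) (M : nat -> nat -> R) (E0 : R) : Prop :=
  (exists phi : nat -> R, (exists i, (i < N)%nat /\ phi i <> 0) /\
     forall i, (i < N)%nat -> mapply N M phi i = E0 * phi i) /\
  (forall (lam : R) (phi : nat -> R), (exists i, (i < N)%nat /\ phi i <> 0) ->
     (forall i, (i < N)%nat -> mapply N M phi i = lam * phi i) -> E0 <= lam).

(* Conjugation by the gauge G a = prod_j (-1)^(k_(2j)) turns -H_AF into an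
   entrywise nonnegative matrix A (a sum of singlet "links"), and |D_L> into G times
   the indicator S of the dimer configurations.  Expanding A^k over words of links,
   split the configurations into the d^L classes of equal pair sums
   k_(2j) + k_(2j+1) mod d: a digitwise shift maps each class injectively into dimer
   configurations without decreasing any path weight, whence tr A^k <= d^L <S|A^k|S>.
   Summing the exponential series gives the thermal bound.  For the ground state the
   same bound holds for the positive matrix A + r I; if S were orthogonal to its top
   eigenspace, <S|(A + r I)^(2n)|S> would grow strictly slower than the trace. *)

From Stdlib Require Import Reals Lra Lia Arith Bool List Classical.
Open Scope R_scope.

Lemma fsum_ext n f g : (forall i, (i < n)%nat -> f i = g i) -> fsum n f = fsum n g.
Proof.
  induction n; simpl; intros H; [reflexivity|].
  rewrite IHn, H; auto; intros; apply H; lia.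
Qed.

Lemma fsum_le n f g : (forall i, (i < n)%nat -> f i <= g i) -> fsum n f <= fsum n g.
Proof.
  induction n; simpl; intros H; [lra|].
  assert (f n <= g n) by (apply H; lia).
  assert (fsum n f <= fsum n g) by (apply IHn; intros; apply H; lia).
  lra.
Qed.

Lemma fsum_nonneg n f : (forall i, (i < n)%nat -> 0 <= f i) -> 0 <= fsum n f.
Proof.
  intros H. replace 0 with (fsum n (fun _ => 0)) by (clear; induction n; simpl; lra).
  apply fsum_le; auto.
Qed.

Lemma fsum_add n f g : fsum n (fun i => f i + g i) = fsum n f + fsum n g.
Proof. induction n; simpl; [lra|]. rewrite IHn; lra. Qed.

Lemma fsum_scal_l n c f : fsum n (fun i => c * f i) = c * fsum n f.
Proof. induction n; simpl; [lra|]. rewrite IHn; lra. Qed.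

Lemma fsum_scal_r n c f : fsum n (fun i => f i * c) = fsum n f * c.
Proof. induction n; simpl; [lra|]. rewrite IHn; lra. Qed.

Lemma fsum_const n c : fsum n (fun _ => c) = INR n * c.
Proof. induction n; simpl fsum; [simpl; lra|]. rewrite IHn, S_INR; lra. Qed.

Lemma fsum_zero n f : (forall i, (i < n)%nat -> f i = 0) -> fsum n f = 0.
Proof. intros H. rewrite (fsum_ext n f (fun _ => 0)) by auto. rewrite fsum_const; lra. Qed.

Lemma fsum_swap n m f :
  fsum n (fun i => fsum m (fun j => f i j)) = fsum m (fun j => fsum n (fun i => f i j)).
Proof.
  induction n; simpl.
  - rewrite fsum_zero; auto.
  - rewrite IHn, <- fsum_add. reflexivity.
Qed.

Lemma fsum_split m r f : fsum (m + r) f = fsum m f + fsum r (fun i => f (m + i)%nat).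
Proof.
  induction r.
  - rewrite Nat.add_0_r. simpl. ring.
  - rewrite Nat.add_succ_r. simpl. rewrite IHr. ring.
Qed.

Lemma fsum_term_le n f k :
  (forall i, (i < n)%nat -> 0 <= f i) -> (k < n)%nat -> f k <= fsum n f.
Proof.
  induction n; simpl; intros H Hk; [lia|].
  assert (0 <= f n) by (apply H; lia).
  destruct (Nat.eq_dec k n) as [->|].
  - assert (0 <= fsum n f) by (apply fsum_nonneg; intros; apply H; lia). lra.
  - assert (f k <= fsum n f) by (apply IHn; [intros; apply H|]; lia). lra.
Qed.

Lemma fsum_pos_exists n f : 0 < fsum n f -> exists i, (i < n)%nat /\ 0 < f i.
Proof.
  intros H. apply NNPP. intros Hn.
  assert (fsum n f <= fsum n (fun _ => 0)).
  { apply fsum_le. intros i Hi. apply Rnot_lt_le. intros Hf. apply Hn. eauto. }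
  rewrite (fsum_zero n (fun _ => 0)) in H0 by auto. lra.
Qed.

Lemma ind_nonneg b : 0 <= ind b.
Proof. destruct b; simpl; lra. Qed.

Lemma ind_le_1 b : ind b <= 1.
Proof. destruct b; simpl; lra. Qed.

Lemma ind_mul_diag b : ind b * ind b = ind b.
Proof. destruct b; simpl; lra. Qed.

Lemma ind_pos b : 0 < ind b -> b = true.
Proof. destruct b; simpl; auto; lra. Qed.

Lemma fsum_delta_l n f a : (a < n)%nat -> fsum n (fun l => ind (a =? l)%nat * f l) = f a.
Proof.
  induction n; simpl; intros Ha; [lia|].
  destruct (Nat.eq_dec a n) as [->|Hne].
  - rewrite Nat.eqb_refl, fsum_zero; [simpl; ring|].
    intros i Hi. replace (n =? i)%nat with false by (symmetry; apply Nat.eqb_neq; lia). simpl; ring.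
  - rewrite IHn by lia. apply Nat.eqb_neq in Hne. rewrite Hne. simpl; ring.
Qed.

Lemma fsum_delta_r n f b : (b < n)%nat -> fsum n (fun l => f l * ind (l =? b)%nat) = f b.
Proof.
  intros Hb. rewrite <- (fsum_delta_l n f b Hb).
  apply fsum_ext; intros l _. rewrite Nat.eqb_sym. ring.
Qed.

Section Reindex.
Variables (n : nat) (f : nat -> nat).
Hypothesis f_range : forall i, (i < n)%nat -> (f i < n)%nat.
Hypothesis f_inj : forall i j, (i < n)%nat -> (j < n)%nat -> f i = f j -> i = j.

Lemma fsum_fiber_le_1 k j : (k <= n)%nat -> fsum k (fun i => ind (f i =? j)%nat) <= 1.
Proof.
  induction k; simpl; intros Hk; [lra|].
  destruct (f k =? j)%nat eqn:E.
  - apply Nat.eqb_eq in E. rewrite fsum_zero; [simpl; lra|].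
    intros i Hi. destruct (f i =? j)%nat eqn:Ei; [|reflexivity].
    apply Nat.eqb_eq in Ei. exfalso. assert (i = k) by (apply f_inj; lia). lia.
  - assert (H := IHk ltac:(lia)). simpl. lra.
Qed.

Lemma fsum_reindex_le g :
  (forall i, (i < n)%nat -> 0 <= g i) -> fsum n (fun i => g (f i)) <= fsum n g.
Proof.
  intros Hg.
  rewrite (fsum_ext n _ (fun i => fsum n (fun j => ind (f i =? j)%nat * g j)))
    by (intros; rewrite fsum_delta_l; auto).
  rewrite fsum_swap. apply fsum_le. intros j Hj.
  rewrite (fsum_ext n _ (fun i => g j * ind (f i =? j)%nat)) by (intros; ring).
  rewrite fsum_scal_l. assert (H := fsum_fiber_le_1 n j (le_n n)).
  assert (0 <= fsum n (fun i => ind (f i =? j)%nat)) by (apply fsum_nonneg; intros; apply ind_nonneg).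
  specialize (Hg j Hj). nra.
Qed.

End Reindex.

Definition qform (N : nat) (u : nat -> R) (M : nat -> nat -> R) (v : nat -> R) : R :=
  fsum N (fun a => fsum N (fun b => u a * M a b * v b)).

Definition trace (N : nat) (M : nat -> nat -> R) : R := fsum N (fun a => M a a).

Lemma fprod_mult n f g : fprod n (fun i => f i * g i) = fprod n f * fprod n g.
Proof. induction n; simpl; [lra|]. rewrite IHn; lra. Qed.

Lemma fprod_ext n f g : (forall i, (i < n)%nat -> f i = g i) -> fprod n f = fprod n g.
Proof.
  induction n; simpl; intros H; [reflexivity|].
  rewrite IHn, H; auto; intros; apply H; lia.
Qed.

Lemma fprod_one n : fprod n (fun _ => 1) = 1.
Proof. induction n; simpl; [|rewrite IHn]; lra. Qed.

Lemma fprod_single n f j0 :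
  (j0 < n)%nat -> (forall j, (j < n)%nat -> j <> j0 -> f j = 1) -> fprod n f = f j0.
Proof.
  induction n; intros Hj H; [lia|]. simpl.
  destruct (Nat.eq_dec j0 n) as [->|].
  - rewrite (fprod_ext n f (fun _ => 1)) by (intros; apply H; lia).
    rewrite fprod_one. ring.
  - rewrite IHn, (H n) by (try lia; intros; apply H; lia). ring.
Qed.

Fixpoint all_lt (n : nat) (b : nat -> bool) : bool :=
  match n with O => true | S n' => all_lt n' b && b n' end.

Lemma all_ltP n b : all_lt n b = true <-> (forall j, (j < n)%nat -> b j = true).
Proof.
  induction n; simpl.
  - split; intros; auto; lia.
  - rewrite andb_true_iff, IHn. split.
    + intros [H1 H2] j Hj. destruct (Nat.eq_dec j n) as [->|]; auto. apply H1; lia.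
    + intros H; split; [intros; apply H|apply H]; lia.
Qed.

Lemma fprod_ind n b : fprod n (fun j => ind (b j)) = ind (all_lt n b).
Proof. induction n; simpl; auto. rewrite IHn. destruct (all_lt n b), (b n); simpl; lra. Qed.

Lemma neg1_pow_even k : (-1) ^ (2 * k) = 1.
Proof. rewrite pow_mult. replace ((-1) ^ 2) with 1 by (simpl; lra). apply pow1. Qed.

Lemma neg1_pow_mul_diag k : (-1) ^ k * (-1) ^ k = 1.
Proof. rewrite <- pow_add. replace (k + k)%nat with (2 * k)%nat by lia. apply neg1_pow_even. Qed.

Lemma neg1_pow_even_sum A B k : (A + B = 2 * k)%nat -> (-1) ^ A = (-1) ^ B.
Proof.
  intros H. rewrite <- (Rmult_1_r ((-1) ^ A)), <- (neg1_pow_mul_diag B), <- Rmult_assoc.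
  rewrite <- pow_add, H, neg1_pow_even. ring.
Qed.

Section Digits.
Local Open Scope nat_scope.
Variable d : nat.
Hypothesis d_gt1 : 1 < d.

Lemma pow_gt0 p : 0 < d ^ p.
Proof. apply Nat.neq_0_lt_0, Nat.pow_nonzero; lia. Qed.

Lemma digit_lt a p : digit d a p < d.
Proof. apply Nat.mod_upper_bound; lia. Qed.

Lemma mod_pow_eq_digits a b p :
  a mod d ^ p = b mod d ^ p <-> (forall q, q < p -> digit d a q = digit d b q).
Proof.
  induction p.
  - rewrite Nat.pow_0_r, !Nat.mod_1_r. split; intros; [lia|auto].
  - assert (Hsplit : forall x, x mod d ^ S p = x mod d ^ p + d ^ p * digit d x p)
      by (intros; rewrite Nat.pow_succ_r', Nat.mul_comm, Nat.Div0.mod_mul_r; reflexivity).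
    rewrite !Hsplit.
    assert (Hlt : forall x, x mod d ^ p < d ^ p) by (intros; apply Nat.mod_upper_bound, Nat.neq_0_lt_0, pow_gt0).
    generalize (Hlt a) (Hlt b) (digit_lt a p) (digit_lt b p) (pow_gt0 p). intros A1 A2 A3 A4 A5.
    split.
    + intros H q Hq.
      assert (Hhigh : digit d a p = digit d b p).
      { apply (f_equal (fun x => x / d ^ p)) in H.
        rewrite !(Nat.mul_comm (d ^ p)), !Nat.div_add, !Nat.div_small in H by lia. exact H. }
      destruct (Nat.eq_dec q p) as [->|]; auto.
      apply IHp; [|lia]. rewrite Hhigh in H. lia.
    + intros H. rewrite (proj2 IHp) by (intros; apply H; lia). rewrite H by lia. reflexivity.
Qed.

Lemma digit_div a k i : digit d (a / d ^ k) i = digit d a (k + i).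
Proof. unfold digit. rewrite Nat.Div0.div_div, Nat.pow_add_r. reflexivity. Qed.

Lemma digits_inj a b : (forall q, digit d a q = digit d b q) -> a = b.
Proof.
  intros H. set (M := a + b + 1).
  assert (a < d ^ M /\ b < d ^ M) as [Ha Hb] by (generalize (Nat.pow_gt_lin_r d M d_gt1); lia).
  rewrite <- (Nat.mod_small a (d ^ M)), <- (Nat.mod_small b (d ^ M)) by auto.
  apply mod_pow_eq_digits. auto.
Qed.

Lemma div_pow_eq_digits a b k :
  a / d ^ k = b / d ^ k <-> (forall q, k <= q -> digit d a q = digit d b q).
Proof.
  split.
  - intros H q Hq. replace q with (k + (q - k)) by lia. rewrite <- !digit_div, H. reflexivity.
  - intros H. apply digits_inj. intros i. rewrite !digit_div. apply H; lia.
Qed.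

Lemma digit_high a n q : a < d ^ n -> n <= q -> digit d a q = 0.
Proof.
  intros Ha Hq. unfold digit. rewrite Nat.div_small; [apply Nat.Div0.mod_0_l|].
  apply Nat.lt_le_trans with (d ^ n); auto. apply Nat.pow_le_mono_r; lia.
Qed.

Fixpoint undigits (n : nat) (f : nat -> nat) : nat :=
  match n with O => O | S n' => undigits n' f + f n' * d ^ n' end.

Lemma undigits_lt n f : (forall q, q < n -> f q < d) -> undigits n f < d ^ n.
Proof.
  induction n as [|k IH]; simpl; intros f_lt; [lia|].
  assert (undigits k f < d ^ k) by (apply IH; intros; apply f_lt; lia).
  assert (f k * d ^ k <= (d - 1) * d ^ k) by (apply Nat.mul_le_mono_r; specialize (f_lt k); lia).
  assert (d * d ^ k = d ^ k + (d - 1) * d ^ k) by (destruct d; [lia|simpl; lia]).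
  lia.
Qed.

Lemma digit_undigits n f q :
  (forall q, q < n -> f q < d) -> q < n -> digit d (undigits n f) q = f q.
Proof.
  induction n as [|k IH]; intros f_lt Hq; [lia|]. simpl.
  assert (Hlow : undigits k f < d ^ k) by (apply undigits_lt; intros; apply f_lt; lia).
  unfold digit. destruct (Nat.eq_dec q k) as [->|].
  - rewrite Nat.div_add, Nat.div_small by (generalize (pow_gt0 k); lia).
    apply Nat.mod_small, f_lt; lia.
  - replace (f k * d ^ k) with ((f k * d ^ (k - q - 1) * d) * d ^ q).
    + rewrite Nat.div_add, Nat.Div0.mod_add by (generalize (pow_gt0 q); lia).
      apply IH; [intros; apply f_lt|]; lia.
    + rewrite <- !Nat.mul_assoc, <- Nat.pow_succ_r', <- Nat.pow_add_r. f_equal. f_equal. lia.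
Qed.

Lemma digit_undigits_high n f q :
  (forall q, q < n -> f q < d) -> n <= q -> digit d (undigits n f) q = 0.
Proof. intros. apply digit_high with n; auto. apply undigits_lt; auto. Qed.

End Digits.

(** * The gauge transformation *)

Section Model.
Variables twoS L : nat.
Hypothesis twoS_pos : (1 <= twoS)%nat.
Local Notation d := (ldim twoS).
Local Notation N := (hdim twoS L).

Lemma ldim_gt1 : (1 < d)%nat.
Proof. unfold ldim; lia. Qed.

Definition singlet_link (p a b : nat) : bool :=
  (a mod d ^ p =? b mod d ^ p)%nat
  && (a / d ^ (p + 2) =? b / d ^ (p + 2))%nat
  && (digit d a (S p) =? d - 1 - digit d a p)%nat
  && (digit d b (S p) =? d - 1 - digit d b p)%nat.

Lemma singlet_linkP p a b : singlet_link p a b = true <->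
  (forall q, q <> p -> q <> S p -> digit d a q = digit d b q) /\
  digit d a (S p) = (d - 1 - digit d a p)%nat /\ digit d b (S p) = (d - 1 - digit d b p)%nat.
Proof.
  unfold singlet_link. rewrite !andb_true_iff, !Nat.eqb_eq.
  rewrite (mod_pow_eq_digits d ldim_gt1), (div_pow_eq_digits d ldim_gt1). split.
  - intros [[[H1 H2] H3] H4]. repeat split; auto. intros q Hq1 Hq2.
    destruct (Nat.lt_ge_cases q p); [apply H1|apply H2]; lia.
  - intros [H1 [H2 H3]]. repeat split; auto; intros; apply H1; lia.
Qed.

Lemma singlet_link_sym p a b : singlet_link p a b = singlet_link p b a.
Proof.
  unfold singlet_link. rewrite (Nat.eqb_sym (a mod _)), (Nat.eqb_sym (a / _)).
  destruct (_ =? _)%nat, (_ =? _)%nat, (digit d a (S p) =? _)%nat, (digit d b (S p) =? _)%nat;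
    reflexivity.
Qed.

Definition gauge_sign (a : nat) : R := fprod L (fun j => (-1) ^ (digit d a (2 * j))).

Definition dimer_pair (a j : nat) : bool :=
  (digit d a (2 * j + 1) =? d - 1 - digit d a (2 * j))%nat.

Definition dimer_support (a : nat) : R := ind (all_lt L (dimer_pair a)).

Lemma gauge_sign_mul_diag a : gauge_sign a * gauge_sign a = 1.
Proof.
  unfold gauge_sign. rewrite <- fprod_mult, <- (fprod_one L).
  apply fprod_ext; intros; apply neg1_pow_mul_diag.
Qed.

Lemma gauge_sign_neq0 a : gauge_sign a <> 0.
Proof. intros E. generalize (gauge_sign_mul_diag a). rewrite E. lra. Qed.

Lemma Dvec_gauge a : Dvec twoS L a = dimer_support a * gauge_sign a.
Proof. unfold Dvec, dimer_support, gauge_sign. rewrite <- fprod_ind, <- fprod_mult. reflexivity. Qed.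

(* G a * G b only sees the even site of the pair (p, p+1), outside of which a and b
   agree; its digits there are k_a, k_b or d-1-k_a, d-1-k_b, with the same parity
   of the sum as in the sign (-1)^(k_a + k_b) of the singlet projector. *)
Lemma Psing_gauge p a b : (p < 2 * L - 1)%nat ->
  INR d * Psing d p a b = ind (singlet_link p a b) * (gauge_sign a * gauge_sign b).
Proof.
  intros Hp. unfold Psing. fold (singlet_link p a b).
  rewrite <- Rmult_assoc, Rinv_r, Rmult_1_l by (apply not_0_INR; unfold ldim; lia).
  destruct (singlet_link p a b) eqn:E; unfold ind; [|ring].
  apply singlet_linkP in E. destruct E as [Hout [Ha Hb]].
  unfold gauge_sign. rewrite !Rmult_1_l, <- fprod_mult.
  rewrite (fprod_ext L _ (fun j => (-1) ^ (digit d a (2 * j) + digit d b (2 * j))))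
    by (intros; rewrite pow_add; reflexivity).
  assert (Hfar : forall j, (2 * j <> p)%nat -> (2 * j <> S p)%nat ->
            (-1) ^ (digit d a (2 * j) + digit d b (2 * j)) = 1).
  { intros j H1 H2. rewrite Hout by auto. apply (neg1_pow_even_sum _ 0 (digit d b (2 * j))). lia. }
  destruct (Nat.Even_or_Odd p) as [[k Hk]|[k Hk]].
  - rewrite (fprod_single L _ k) by (try lia; intros; apply Hfar; lia). subst. reflexivity.
  - rewrite (fprod_single L _ (S k)) by (try lia; intros; apply Hfar; lia).
    replace (2 * S k)%nat with (S p) by lia. rewrite Ha, Hb.
    generalize (digit_lt d ldim_gt1 a p) (digit_lt d ldim_gt1 b p). intros.
    apply neg1_pow_even_sum with (d - 1)%nat. unfold ldim in *. lia.
Qed.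

(* Links p >= 2L-1 are identities, so that [hopping r] is A + r I for the entrywise
   nonnegative A with H_AF = - G A G, G = gauge_sign; the path expansion then treats
   the shift r like any other link. *)
Definition hop (p a b : nat) : R :=
  if (p <? 2 * L - 1)%nat then ind (singlet_link p a b) else ind (a =? b)%nat.

Definition hopping (r : nat) (a b : nat) : R := fsum (2 * L - 1 + r) (fun p => hop p a b).

Lemma hop_nonneg p a b : 0 <= hop p a b.
Proof. unfold hop; destruct (p <? 2 * L - 1)%nat; apply ind_nonneg. Qed.

Lemma hop_sym p a b : hop p a b = hop p b a.
Proof. unfold hop. rewrite singlet_link_sym, Nat.eqb_sym. reflexivity. Qed.

Lemma hopping_sym r a b : hopping r a b = hopping r b a.
Proof. apply fsum_ext; intros; apply hop_sym. Qed.

Lemma hopping_bounds a b : 0 <= hopping 0 a b <= INR (2 * L - 1).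
Proof.
  unfold hopping. rewrite Nat.add_0_r. split.
  - apply fsum_nonneg; intros; apply hop_nonneg.
  - rewrite <- (Rmult_1_r (INR _)), <- fsum_const. apply fsum_le; intros.
    unfold hop. destruct (_ <? _)%nat; apply ind_le_1.
Qed.

Lemma hopping_shift r a b : hopping r a b = hopping 0 a b + INR r * ind (a =? b)%nat.
Proof.
  unfold hopping. rewrite fsum_split, Nat.add_0_r, <- fsum_const. f_equal.
  apply fsum_ext. intros i _. unfold hop.
  replace (2 * L - 1 + i <? 2 * L - 1)%nat with false by (symmetry; apply Nat.ltb_ge, Nat.le_add_r).
  reflexivity.
Qed.

Lemma Ham_gauge a b : Ham twoS L a b = - (gauge_sign a * gauge_sign b) * hopping 0 a b.
Proof.
  unfold Ham, hopping. rewrite Nat.add_0_r, <- !Ropp_mult_distr_l, <- fsum_scal_l, <- fsum_scal_l.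
  f_equal. apply fsum_ext. intros p Hp. rewrite Psing_gauge by auto. unfold hop.
  replace (p <? 2 * L - 1)%nat with true by (symmetry; apply Nat.ltb_lt; auto). ring.
Qed.

End Model.

(** * Expansion of matrix powers over words *)

Section PathExpansion.
Variables (N K : nat) (g : nat -> nat -> nat -> R).

Fixpoint path_weight (w : list nat) (a b : nat) : R :=
  match w with
  | nil => ind (a =? b)%nat
  | p :: w' => fsum N (fun l => path_weight w' a l * g p l b)
  end.

Fixpoint sum_words (k : nat) (F : list nat -> R) : R :=
  match k with
  | O => F nil
  | S k' => fsum K (fun p => sum_words k' (fun w => F (p :: w)))
  end.

Lemma sum_words_le k F G : (forall w, F w <= G w) -> sum_words k F <= sum_words k G.
Proof.
  revert F G; induction k; intros F G H; simpl; auto.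
  apply fsum_le; intros; apply IHk; auto.
Qed.

Lemma sum_words_nonneg k F : (forall w, 0 <= F w) -> 0 <= sum_words k F.
Proof.
  revert F; induction k; intros F H; simpl; auto.
  apply fsum_nonneg; intros; apply IHk; auto.
Qed.

Lemma sum_words_fsum k n F :
  sum_words k (fun w => fsum n (fun l => F w l)) = fsum n (fun l => sum_words k (fun w => F w l)).
Proof.
  revert F; induction k; intros F; simpl; auto.
  rewrite <- fsum_swap. apply fsum_ext. intros p _. apply (IHk (fun w l => F (p :: w) l)).
Qed.

Lemma sum_words_scal_l k c F : sum_words k (fun w => c * F w) = c * sum_words k F.
Proof.
  revert F; induction k; intros F; simpl; auto.
  rewrite <- fsum_scal_l. apply fsum_ext; intros p _; apply (IHk (fun w => F (p :: w))).
Qed.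

Lemma sum_words_scal_r k c F : sum_words k (fun w => F w * c) = sum_words k F * c.
Proof.
  rewrite <- (Rmult_comm c), <- sum_words_scal_l.
  revert F; induction k; intros F; simpl; [ring|].
  apply fsum_ext; intros p _; apply (IHk (fun w => F (p :: w))).
Qed.

Lemma matpow_sum_words k a b :
  matpow N (fun x y => fsum K (fun p => g p x y)) k a b = sum_words k (fun w => path_weight w a b).
Proof.
  revert b; induction k; intros b; simpl; auto.
  rewrite (fsum_ext N _ (fun l => fsum K (fun p => sum_words k (fun w => path_weight w a l) * g p l b)))
    by (intros; rewrite IHk, fsum_scal_l; reflexivity).
  rewrite fsum_swap. apply fsum_ext. intros p _. simpl.
  rewrite sum_words_fsum. apply fsum_ext. intros. symmetry; apply sum_words_scal_r.
Qed.

Hypothesis g_nonneg : forall p a b, 0 <= g p a b.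

Lemma path_weight_nonneg w a b : 0 <= path_weight w a b.
Proof.
  revert b; induction w; intros b; simpl; [apply ind_nonneg|].
  apply fsum_nonneg; intros. apply Rmult_le_pos; auto.
Qed.

End PathExpansion.

(** * Shifting configurations *)

Lemma mod_add_r_inj d x y k : (0 < d)%nat -> (x < d)%nat -> (y < d)%nat ->
  ((x + k) mod d = (y + k) mod d)%nat -> x = y.
Proof.
  intros Hd Hx Hy H.
  assert (E : forall z, (z < d)%nat -> z = (((z + k) mod d + (d - 1) * k) mod d)%nat).
  { intros z Hz. rewrite Nat.Div0.add_mod_idemp_l.
    replace (z + k + (d - 1) * k)%nat with (z + k * d)%nat by nia.
    rewrite Nat.Div0.mod_add, Nat.mod_small; auto. }
  rewrite (E x Hx), (E y Hy), H. reflexivity.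
Qed.

Lemma pair_sum_mod_top d x y : (x < d)%nat -> (y < d)%nat ->
  ((x + y) mod d = d - 1)%nat -> y = (d - 1 - x)%nat.
Proof.
  intros Hx Hy H. assert (E := Nat.div_mod_eq (x + y) d).
  assert (Hk : ((x + y) / d < 2)%nat) by (apply Nat.Div0.div_lt_upper_bound; lia).
  rewrite H in E. destruct ((x + y) / d)%nat as [|[|]]; lia.
Qed.

Lemma shifted_pair_sum d x y x' y' c c' :
  (0 < d)%nat -> (x < d)%nat -> (y < d)%nat -> (x' < d)%nat -> (y' < d)%nat ->
  (c + c' = d - 1)%nat -> ((x + y) mod d = (x' + y') mod d)%nat ->
  (((x + d - x' + c) mod d + (y + d - y' + c') mod d) mod d = d - 1)%nat.
Proof.
  intros Hd Hx Hy Hx' Hy' Hc Hs. rewrite <- Nat.Div0.add_mod.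
  assert (E := Nat.div_mod_eq (x + y) d). assert (E' := Nat.div_mod_eq (x' + y') d).
  assert (Hk' : ((x' + y') / d < 2)%nat) by (apply Nat.Div0.div_lt_upper_bound; lia).
  rewrite Hs in E.
  replace (x + d - x' + c + (y + d - y' + c'))%nat
    with (d - 1 + ((x + y) / d + 2 - (x' + y') / d) * d)%nat by nia.
  rewrite Nat.Div0.mod_add. apply Nat.mod_small. lia.
Qed.

Section Shift.
Variables twoS L : nat.
Hypothesis twoS_pos : (1 <= twoS)%nat.
Local Notation d := (ldim twoS).
Local Notation N := (hdim twoS L).
Let d_gt1 := ldim_gt1 twoS twoS_pos.

Definition ref_digit (q : nat) : nat := if Nat.even q then 0%nat else (d - 1)%nat.

Lemma ref_digit_pair p : (ref_digit p + ref_digit (S p) = d - 1)%nat.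
Proof. unfold ref_digit. rewrite Nat.even_succ, <- Nat.negb_even. destruct (Nat.even p); simpl; lia. Qed.

Definition shift_digit (a' a q : nat) : nat :=
  ((digit d a q + d - digit d a' q + ref_digit q) mod d)%nat.

(* Digitwise a - a' + ref (mod d), where ref = 0 (d-1) 0 (d-1) ... is a dimer
   configuration: it preserves singlet links and maps the pair-sum class of a'
   into the dimer configurations. *)
Definition shift (a' a : nat) : nat := undigits d (2 * L) (shift_digit a' a).

Lemma shift_digit_lt a' a q : (shift_digit a' a q < d)%nat.
Proof. apply Nat.mod_upper_bound; lia. Qed.

Lemma shift_lt a' a : (shift a' a < N)%nat.
Proof. apply undigits_lt; auto. intros; apply shift_digit_lt. Qed.

Lemma digit_shift a' a q :
  digit d (shift a' a) q = if (q <? 2 * L)%nat then shift_digit a' a q else 0%nat.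
Proof.
  destruct (q <? 2 * L)%nat eqn:Hq; [apply Nat.ltb_lt in Hq|apply Nat.ltb_ge in Hq].
  - apply digit_undigits; auto. intros; apply shift_digit_lt.
  - apply digit_undigits_high; auto. intros; apply shift_digit_lt.
Qed.

Lemma digit_conf_high a q : (a < N)%nat -> (2 * L <= q)%nat -> digit d a q = 0%nat.
Proof. intros; apply digit_high with (2 * L)%nat; auto. Qed.

Lemma shift_inj a' a b : (a < N)%nat -> (b < N)%nat -> shift a' a = shift a' b -> a = b.
Proof.
  intros Ha Hb H. apply (digits_inj d d_gt1). intros q.
  destruct (Nat.lt_ge_cases q (2 * L)).
  - assert (E : shift_digit a' a q = shift_digit a' b q).
    { generalize (digit_shift a' a q) (digit_shift a' b q).
      rewrite H. replace (q <? 2 * L)%nat with true by (symmetry; apply Nat.ltb_lt; auto). congruence. }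
    unfold shift_digit in E. generalize (digit_lt d d_gt1 a' q). intros.
    rewrite <- !(Nat.add_sub_assoc (digit d _ q)), <- !Nat.add_assoc in E by lia.
    apply mod_add_r_inj in E; auto; try lia; apply digit_lt; auto.
  - rewrite !digit_conf_high; auto.
Qed.

Lemma shift_digit_singlet a' a p :
  digit d a (S p) = (d - 1 - digit d a p)%nat -> digit d a' (S p) = (d - 1 - digit d a' p)%nat ->
  shift_digit a' a (S p) = (d - 1 - shift_digit a' a p)%nat.
Proof.
  intros Ha Ha'. apply pair_sum_mod_top; try apply shift_digit_lt.
  generalize (digit_lt d d_gt1 a p) (digit_lt d d_gt1 a' p). intros.
  apply shifted_pair_sum; try apply digit_lt; auto; try lia; [apply ref_digit_pair|].
  rewrite Ha, Ha'. f_equal. lia.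
Qed.

Lemma singlet_link_shift p a' b' a b : (p < 2 * L - 1)%nat ->
  singlet_link twoS p a' b' = true -> singlet_link twoS p a b = true ->
  singlet_link twoS p (shift a' a) (shift b' b) = true.
Proof.
  intros Hp E' E. apply (singlet_linkP twoS twoS_pos) in E, E'.
  destruct E as [Hout [Ha Hb]], E' as [Hout' [Ha' Hb']].
  apply (singlet_linkP twoS twoS_pos). split.
  - intros q Hq1 Hq2. rewrite !digit_shift. destruct (q <? 2 * L)%nat; auto.
    unfold shift_digit. rewrite Hout, Hout' by auto. reflexivity.
  - rewrite !digit_shift.
    replace (p <? 2 * L)%nat with true by (symmetry; apply Nat.ltb_lt; lia).
    replace (S p <? 2 * L)%nat with true by (symmetry; apply Nat.ltb_lt; lia).
    split; apply shift_digit_singlet; auto.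
Qed.

Definition pair_sum (a j : nat) : nat :=
  ((digit d a (2 * j) + digit d a (2 * j + 1)) mod d)%nat.

Definition pair_class (a : nat) : nat := undigits d L (pair_sum a).

Lemma pair_sum_lt a j : (pair_sum a j < d)%nat.
Proof. apply Nat.mod_upper_bound; lia. Qed.

Lemma pair_class_lt a : (pair_class a < d ^ L)%nat.
Proof. apply undigits_lt; auto. intros; apply pair_sum_lt. Qed.

Lemma pair_class_eq a a' j : pair_class a = pair_class a' -> (j < L)%nat ->
  pair_sum a j = pair_sum a' j.
Proof.
  intros H Hj. unfold pair_class in H.
  rewrite <- (digit_undigits d d_gt1 L (pair_sum a) j), H by (auto; intros; apply pair_sum_lt).
  apply digit_undigits; auto. intros; apply pair_sum_lt.
Qed.

Lemma dimer_support_shift a' a : pair_class a = pair_class a' -> dimer_support twoS L (shift a' a) = 1.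
Proof.
  intros H. unfold dimer_support. replace (all_lt L _) with true; [reflexivity|].
  symmetry. apply all_ltP. intros j Hj. unfold dimer_pair. apply Nat.eqb_eq.
  rewrite !digit_shift.
  replace (2 * j <? 2 * L)%nat with true by (symmetry; apply Nat.ltb_lt; lia).
  replace (2 * j + 1 <? 2 * L)%nat with true by (symmetry; apply Nat.ltb_lt; lia).
  apply pair_sum_mod_top; try apply shift_digit_lt.
  apply shifted_pair_sum; try apply digit_lt; auto; try lia.
  - rewrite Nat.add_1_r. apply ref_digit_pair.
  - apply (pair_class_eq a a' j H Hj).
Qed.

End Shift.

(** * The trace bound *)

Section TraceBound.
Variables twoS L : nat.
Hypothesis twoS_pos : (1 <= twoS)%nat.
Local Notation d := (ldim twoS).
Local Notation N := (hdim twoS L).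
Local Notation shift := (shift twoS L).
Local Notation W := (path_weight N (hop twoS L)).

Lemma hop_shift_le p a' b' a b : 0 < hop twoS L p a' b' ->
  hop twoS L p a b <= hop twoS L p (shift a' a) (shift b' b).
Proof.
  unfold hop. destruct (p <? 2 * L - 1)%nat eqn:Hp; intros H; apply ind_pos in H.
  - destruct (singlet_link twoS p a b) eqn:E; [|apply ind_nonneg].
    rewrite (singlet_link_shift twoS L twoS_pos p a' b' a b); auto; [lra|]. apply Nat.ltb_lt; auto.
  - apply Nat.eqb_eq in H as <-. destruct (a =? b)%nat eqn:E; [|apply ind_nonneg].
    apply Nat.eqb_eq in E as <-. rewrite Nat.eqb_refl. lra.
Qed.

Lemma path_weight_nonneg_hop w a b : 0 <= W w a b.
Proof. apply path_weight_nonneg. apply hop_nonneg. Qed.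

(* Induction on the word: the intermediate configuration l of a path from a to b
   is matched with the shifted l of a path of positive weight from a' to b'. *)
Lemma path_weight_shift_le w a' b' a b : (a < N)%nat -> (b < N)%nat -> 0 < W w a' b' ->
  W w a b <= W w (shift a' a) (shift b' b).
Proof.
  revert b' b. induction w as [|p w IH]; intros b' b Ha Hb Hpos; simpl in *.
  - apply ind_pos, Nat.eqb_eq in Hpos as <-. destruct (a =? b)%nat eqn:E; [|apply ind_nonneg].
    apply Nat.eqb_eq in E as <-. rewrite Nat.eqb_refl. lra.
  - apply fsum_pos_exists in Hpos as [l' [Hl' Hpos]].
    assert (0 < W w a' l' /\ 0 < hop twoS L p l' b') as [H1 H2].
    { generalize (path_weight_nonneg_hop w a' l') (hop_nonneg twoS L p l' b'). intros.
      split; apply Rnot_le_lt; intros; nra. }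
    apply Rle_trans with (fsum N (fun l => W w (shift a' a) (shift l' l) * hop twoS L p (shift l' l) (shift b' b))).
    + apply fsum_le. intros l Hl. apply Rmult_le_compat;
        auto using path_weight_nonneg_hop, hop_nonneg, hop_shift_le.
    + refine (fsum_reindex_le N (shift l') _ _ (fun l => W w (shift a' a) l * hop twoS L p l (shift b' b)) _).
      * intros; apply shift_lt; auto.
      * intros; eapply shift_inj; eauto.
      * intros; apply Rmult_le_pos; auto using path_weight_nonneg_hop, hop_nonneg.
Qed.

Definition class_ind (s a : nat) : R := ind (pair_class twoS L a =? s)%nat.

Lemma dimer_support_nonneg a : 0 <= dimer_support twoS L a.
Proof. apply ind_nonneg. Qed.

Lemma qform_nonneg u v w : (forall a, 0 <= u a) -> (forall b, 0 <= v b) -> 0 <= qform N u (W w) v.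
Proof.
  intros Hu Hv. apply fsum_nonneg; intros; apply fsum_nonneg; intros.
  repeat apply Rmult_le_pos; auto using path_weight_nonneg_hop.
Qed.

Lemma qform_shift_le a' b' u M v :
  (forall a, 0 <= u a) -> (forall a b, 0 <= M a b) -> (forall b, 0 <= v b) ->
  qform N (fun a => u (shift a' a)) (fun a b => M (shift a' a) (shift b' b)) (fun b => v (shift b' b))
  <= qform N u M v.
Proof.
  intros Hu HM Hv. unfold qform.
  apply Rle_trans with (fsum N (fun a => fsum N (fun b => u (shift a' a) * M (shift a' a) b * v b))).
  - apply fsum_le; intros a Ha.
    refine (fsum_reindex_le N (shift b') _ _ (fun b => u (shift a' a) * M (shift a' a) b * v b) _).
    + intros; apply shift_lt; auto.
    + intros; eapply shift_inj; eauto.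
    + intros; repeat apply Rmult_le_pos; auto.
  - refine (fsum_reindex_le N (shift a') _ _ (fun a => fsum N (fun b => u a * M a b * v b)) _).
    + intros; apply shift_lt; auto.
    + intros; eapply shift_inj; eauto.
    + intros; apply fsum_nonneg; intros; repeat apply Rmult_le_pos; auto.
Qed.

Lemma class_form_le_dimer_form s w :
  qform N (class_ind s) (W w) (class_ind s) <= qform N (dimer_support twoS L) (W w) (dimer_support twoS L).
Proof.
  destruct (classic (exists a' b', (a' < N)%nat /\ (b' < N)%nat /\ pair_class twoS L a' = s /\
     pair_class twoS L b' = s /\ 0 < W w a' b')) as [[a' [b' [Ha' [Hb' [Ca [Cb Hw]]]]]]|Hn].
  - eapply Rle_trans;
      [|apply (qform_shift_le a' b'); auto using dimer_support_nonneg, path_weight_nonneg_hop].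
    apply fsum_le; intros a Ha; apply fsum_le; intros b Hb. unfold class_ind.
    destruct (pair_class twoS L a =? s)%nat eqn:E1; simpl;
      [|rewrite !Rmult_0_l; apply Rmult_le_pos; [apply Rmult_le_pos|];
        auto using dimer_support_nonneg, path_weight_nonneg_hop].
    destruct (pair_class twoS L b =? s)%nat eqn:E2; simpl;
      [|rewrite !Rmult_0_r; apply Rmult_le_pos; [apply Rmult_le_pos|];
        auto using dimer_support_nonneg, path_weight_nonneg_hop].
    apply Nat.eqb_eq in E1, E2.
    rewrite !dimer_support_shift by (auto; congruence).
    rewrite !Rmult_1_l, !Rmult_1_r. apply path_weight_shift_le; auto.
  - eapply Rle_trans; [|apply qform_nonneg; apply dimer_support_nonneg].
    unfold qform. rewrite <- (fsum_zero N (fun _ => fsum N (fun _ => 0))) by (intros; apply fsum_zero; auto).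
    apply fsum_le; intros a Ha; apply fsum_le; intros b Hb. unfold class_ind.
    destruct (pair_class twoS L a =? s)%nat eqn:E1; simpl; [|lra].
    destruct (pair_class twoS L b =? s)%nat eqn:E2; simpl; [|lra].
    apply Nat.eqb_eq in E1, E2. apply Rnot_lt_le. intros Hw. apply Hn.
    exists a, b. repeat split; auto. lra.
Qed.

Section Powers.
Variables r k : nat.
Local Notation T := (matpow N (hopping twoS L r) k).

Lemma matpow_hopping_nonneg a b : 0 <= T a b.
Proof.
  unfold hopping. rewrite matpow_sum_words. apply sum_words_nonneg. intros; apply path_weight_nonneg_hop.
Qed.

Lemma qform_matpow_hopping u v :
  qform N u T v = sum_words (2 * L - 1 + r) k (fun w => qform N u (W w) v).
Proof.
  unfold qform. rewrite sum_words_fsum. apply fsum_ext; intros a _.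
  rewrite sum_words_fsum. apply fsum_ext; intros b _.
  unfold hopping. rewrite matpow_sum_words, sum_words_scal_r, sum_words_scal_l. reflexivity.
Qed.

Lemma trace_le_class_forms : trace N T <= fsum (d ^ L) (fun s => qform N (class_ind s) T (class_ind s)).
Proof.
  unfold qform. rewrite <- fsum_swap. apply fsum_le. intros a Ha.
  rewrite <- (Rmult_1_l (T a a)).
  rewrite <- (fsum_delta_l (d ^ L) (fun _ => 1) (pair_class twoS L a)) by apply pair_class_lt, twoS_pos.
  rewrite <- fsum_scal_r. apply fsum_le. intros s Hs.
  apply Rle_trans with (class_ind s a * T a a * class_ind s a).
  - right. unfold class_ind. rewrite Rmult_1_r, Rmult_comm, Rmult_assoc, ind_mul_diag. ring.
  - apply (fsum_term_le N (fun b => class_ind s a * T a b * class_ind s b)); auto.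
    intros; unfold class_ind; repeat apply Rmult_le_pos; auto using ind_nonneg, matpow_hopping_nonneg.
Qed.

Lemma trace_le_dimer_form :
  trace N T <= INR (d ^ L) * qform N (dimer_support twoS L) T (dimer_support twoS L).
Proof.
  rewrite <- fsum_const. eapply Rle_trans; [apply trace_le_class_forms|].
  apply fsum_le. intros s _. rewrite !qform_matpow_hopping.
  apply sum_words_le. intros w. apply class_form_le_dimer_form.
Qed.

End Powers.

End TraceBound.

(** * The thermal expectation *)

Lemma Un_cv_ext u v l : (forall n, u n = v n) -> Un_cv u l -> Un_cv v l.
Proof. intros H Hu eps He. destruct (Hu eps He) as [M HM]. exists M. intros n Hn. rewrite <- H. auto. Qed.

Lemma Un_cv_const c : Un_cv (fun _ => c) c.
Proof. intros eps He. exists 0%nat. intros. unfold Rdist. rewrite Rminus_diag, Rabs_R0. auto. Qed.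

Lemma Un_cv_fsum n u l : (forall i, (i < n)%nat -> Un_cv (u i) (l i)) ->
  Un_cv (fun k => fsum n (fun i => u i k)) (fsum n l).
Proof.
  induction n; intros H; simpl.
  - apply Un_cv_const.
  - apply CV_plus; [apply IHn; intros|]; apply H; lia.
Qed.

Lemma fsum_sum_f_R0 n N f :
  fsum N (fun a => sum_f_R0 (fun k => f a k) n) = sum_f_R0 (fun k => fsum N (fun a => f a k)) n.
Proof. induction n; simpl; auto. rewrite fsum_add, IHn. reflexivity. Qed.

Section ExpSeries.
Variables (N : nat) (M E : nat -> nat -> R).
Hypothesis HE : is_mexp N M E.

Lemma qform_mexp u v :
  Un_cv (fun n => sum_f_R0 (fun k => qform N u (matpow N M k) v / INR (fact k)) n) (qform N u E v).
Proof.
  apply (Un_cv_ext (fun n => qform N u (fun a b => sum_f_R0 (fun k => matpow N M k a b / INR (fact k)) n) v)).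
  - intros n. unfold qform. symmetry.
    transitivity (sum_f_R0 (fun k =>
      fsum N (fun a => fsum N (fun b => u a * (matpow N M k a b / INR (fact k)) * v b))) n).
    { apply sum_eq; intros k _. unfold Rdiv. rewrite <- fsum_scal_r. apply fsum_ext; intros a _.
      rewrite <- fsum_scal_r. apply fsum_ext; intros; ring. }
    rewrite <- fsum_sum_f_R0. apply fsum_ext; intros a _.
    rewrite <- fsum_sum_f_R0. apply fsum_ext; intros b _.
    rewrite scal_sum, Rmult_comm, scal_sum. apply sum_eq; intros; ring.
  - unfold qform. apply Un_cv_fsum. intros a Ha. apply Un_cv_fsum. intros b Hb.
    apply CV_mult; [|apply Un_cv_const]. apply CV_mult; [apply Un_cv_const|]. apply HE; auto.
Qed.

Lemma trace_mexp :
  Un_cv (fun n => sum_f_R0 (fun k => trace N (matpow N M k) / INR (fact k)) n) (trace N E).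
Proof.
  apply (Un_cv_ext (fun n => fsum N (fun a => sum_f_R0 (fun k => matpow N M k a a / INR (fact k)) n))).
  - intros n. rewrite fsum_sum_f_R0. apply sum_eq. intros k _. unfold Rdiv, trace. apply fsum_scal_r.
  - apply Un_cv_fsum. intros a Ha. apply HE; auto.
Qed.

End ExpSeries.

Section Thermal.
Variables twoS L : nat.
Hypothesis twoS_pos : (1 <= twoS)%nat.
Variable beta : R.
Local Notation d := (ldim twoS).
Local Notation N := (hdim twoS L).
Local Notation G := (gauge_sign twoS L).
Local Notation T := (matpow N (hopping twoS L 0)).

Lemma matpow_gauge k a b :
  matpow N (fun a b => - beta * Ham twoS L a b) k a b = beta ^ k * (G a * G b) * T k a b.
Proof.
  revert b; induction k; intros b; simpl.
  - destruct (a =? b)%nat eqn:E; simpl; [|ring].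
    apply Nat.eqb_eq in E as <-. rewrite gauge_sign_mul_diag by auto. ring.
  - rewrite <- fsum_scal_l. apply fsum_ext; intros l _. rewrite IHk, Ham_gauge by auto.
    transitivity (beta * beta ^ k * (G a * G b) * (T k a l * hopping twoS L 0 l b) * (G l * G l)); [ring|].
    rewrite gauge_sign_mul_diag by auto. ring.
Qed.

Lemma qform_Dvec_matpow k :
  qform N (Dvec twoS L) (matpow N (fun a b => - beta * Ham twoS L a b) k) (Dvec twoS L)
  = beta ^ k * qform N (dimer_support twoS L) (T k) (dimer_support twoS L).
Proof.
  unfold qform. rewrite <- fsum_scal_l. apply fsum_ext; intros a _.
  rewrite <- fsum_scal_l. apply fsum_ext; intros b _.
  rewrite matpow_gauge, !Dvec_gauge.
  transitivity (beta ^ k * (dimer_support twoS L a * T k a b * dimer_support twoS L b) * (G a * G a) * (G b * G b));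
    [ring|]. rewrite !gauge_sign_mul_diag by auto. ring.
Qed.

Lemma trace_matpow k :
  trace N (matpow N (fun a b => - beta * Ham twoS L a b) k) = beta ^ k * trace N (T k).
Proof.
  unfold trace. rewrite <- fsum_scal_l. apply fsum_ext; intros a _.
  rewrite matpow_gauge, gauge_sign_mul_diag by auto. ring.
Qed.

Hypothesis beta_pos : 0 < beta.
Variable E : nat -> nat -> R.
Hypothesis HE : is_mexp N (fun a b => - beta * Ham twoS L a b) E.

Lemma trace_mexp_pos : 0 < trace N E.
Proof.
  assert (Hterm : forall k, 0 <= trace N (matpow N (fun a b => - beta * Ham twoS L a b) k) / INR (fact k)).
  { intros k. rewrite trace_matpow. apply Rmult_le_pos; [apply Rmult_le_pos|].
    - apply pow_le; lra.
    - apply fsum_nonneg; intros; apply matpow_hopping_nonneg; auto.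
    - apply Rlt_le, Rinv_0_lt_compat, INR_fact_lt_0. }
  apply Rlt_le_trans with (sum_f_R0 (fun k => trace N (matpow N (fun a b => - beta * Ham twoS L a b) k) / INR (fact k)) 0).
  - simpl. unfold trace. rewrite (fsum_ext N _ (fun _ => 1)) by (intros; rewrite Nat.eqb_refl; reflexivity).
    rewrite fsum_const. unfold hdim. rewrite pow_INR.
    assert (0 < INR d) by (apply lt_0_INR; unfold ldim; lia).
    assert (0 < INR d ^ (2 * L)) by (apply pow_lt; auto).
    rewrite Rmult_1_r; unfold Rdiv; rewrite Rinv_1, Rmult_1_r. exact H0.
  - apply sum_incr; auto. apply trace_mexp; auto.
Qed.

Lemma trace_mexp_le_dimer_form : trace N E <= INR (d ^ L) * qform N (Dvec twoS L) E (Dvec twoS L).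
Proof.
  eapply Rle_cv_lim;
    [|apply (trace_mexp N _ E HE)|apply (CV_mult _ _ _ _ (Un_cv_const _) (qform_mexp N _ E HE _ _))].
  intros n. cbv beta. rewrite scal_sum. apply sum_Rle. intros k _.
  rewrite trace_matpow, qform_Dvec_matpow.
  assert (0 <= beta ^ k / INR (fact k)).
  { apply Rmult_le_pos; [apply pow_le; lra|]. apply Rlt_le, Rinv_0_lt_compat, INR_fact_lt_0. }
  generalize (trace_le_dimer_form twoS L twoS_pos 0 k). unfold Rdiv. nra.
Qed.

Lemma thermal_dimer_weight_ge :
  qform N (Dvec twoS L) E (Dvec twoS L) / trace N E >= / (INR d ^ L).
Proof.
  assert (Htr := trace_mexp_pos). assert (Hle := trace_mexp_le_dimer_form).
  rewrite pow_INR in Hle. assert (0 < INR d ^ L) by (apply pow_lt, lt_0_INR; unfold ldim; lia).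
  apply Rle_ge. apply (Rmult_le_reg_l (INR d ^ L)); auto.
  apply (Rmult_le_reg_r (trace N E)); auto.
  unfold Rdiv. rewrite Rinv_r, Rmult_1_l, Rmult_assoc, Rmult_assoc, Rinv_l by lra. lra.
Qed.

End Thermal.

Definition dot (N : nat) (x y : nat -> R) : R := fsum N (fun i => x i * y i).
Definition nrm2 (N : nat) (x : nat -> R) : R := dot N x x.

Section Euclid.
Variable N : nat.

Lemma dot_ext x y x' y' : (forall i, (i < N)%nat -> x i = x' i) -> (forall i, (i < N)%nat -> y i = y' i) ->
  dot N x y = dot N x' y'.
Proof. intros Hx Hy; apply fsum_ext; intros; rewrite Hx, Hy; auto. Qed.

Lemma nrm2_ext x y : (forall i, (i < N)%nat -> x i = y i) -> nrm2 N x = nrm2 N y.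
Proof. intros; apply dot_ext; auto. Qed.

Lemma dot_add_scal_r x y z t : dot N x (fun i => y i + t * z i) = dot N x y + t * dot N x z.
Proof. unfold dot. rewrite <- fsum_scal_l, <- fsum_add. apply fsum_ext; intros; ring. Qed.

Lemma dot_scal_r x y c : dot N x (fun i => c * y i) = c * dot N x y.
Proof. unfold dot. rewrite <- fsum_scal_l. apply fsum_ext; intros; ring. Qed.

Lemma dot_scal_l x y c : dot N (fun i => c * x i) y = c * dot N x y.
Proof. unfold dot. rewrite <- fsum_scal_l. apply fsum_ext; intros; ring. Qed.

Lemma nrm2_add_scal x y t :
  nrm2 N (fun i => x i + t * y i) = nrm2 N x + 2 * t * dot N x y + t ^ 2 * nrm2 N y.
Proof. unfold nrm2, dot. rewrite <- !fsum_scal_l, <- !fsum_add. apply fsum_ext; intros; ring. Qed.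

Lemma nrm2_scal x c : nrm2 N (fun i => c * x i) = c ^ 2 * nrm2 N x.
Proof. unfold nrm2, dot. rewrite <- fsum_scal_l. apply fsum_ext; intros; ring. Qed.

Lemma nrm2_nonneg x : 0 <= nrm2 N x.
Proof. apply fsum_nonneg; intros; nra. Qed.

Lemma nrm2_eq0 x : nrm2 N x = 0 -> forall i, (i < N)%nat -> x i = 0.
Proof.
  intros H i Hi.
  assert (x i * x i <= nrm2 N x) by (apply (fsum_term_le N (fun i => x i * x i)); auto; intros; nra).
  nra.
Qed.

Lemma nrm2_pos x : (exists i, (i < N)%nat /\ x i <> 0) -> 0 < nrm2 N x.
Proof.
  intros [i [Hi Hx]]. destruct (Rle_lt_or_eq_dec _ _ (nrm2_nonneg x)) as [|E]; auto.
  exfalso. apply Hx. apply nrm2_eq0; auto.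
Qed.

Lemma nrm2_eq1_coord_bounds x i : nrm2 N x = 1 -> (i < N)%nat -> Ropp R1 <= x i <= R1.
Proof.
  intros H Hi.
  assert (x i * x i <= nrm2 N x) by (apply (fsum_term_le N (fun i => x i * x i)); auto; intros; nra).
  change R1 with 1. nra.
Qed.

Lemma nrm2_eq1_nonzero x : nrm2 N x = 1 -> exists i, (i < N)%nat /\ x i <> 0.
Proof.
  intros H. apply NNPP. intros Hn. assert (nrm2 N x = 0); [|lra].
  apply fsum_zero. intros i Hi. destruct (Req_dec (x i) 0) as [->|E]; [ring|].
  exfalso; apply Hn; eauto.
Qed.

Lemma cauchy_schwarz x y : (dot N x y) ^ 2 <= nrm2 N x * nrm2 N y.
Proof.
  destruct (Rle_lt_or_eq_dec _ _ (nrm2_nonneg x)) as [Hp|E].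
  - assert (H := nrm2_nonneg (fun i => dot N x y / nrm2 N x * x i + (-1) * y i)).
    rewrite nrm2_add_scal, nrm2_scal, dot_scal_l in H. unfold nrm2 in *.
    set (a := dot N x x) in *. set (b := dot N x y) in *. set (c := dot N y y) in *.
    replace ((b / a) ^ 2 * a + 2 * -1 * (b / a * b) + (-1) ^ 2 * c) with ((a * c - b ^ 2) / a) in H
      by (field; lra).
    assert (0 <= a * c - b ^ 2); [|lra].
    apply (Rmult_le_reg_r (/ a)); [apply Rinv_0_lt_compat; lra|]. lra.
  - assert (dot N x y = 0) by (apply fsum_zero; intros; rewrite (nrm2_eq0 x) by auto; ring).
    rewrite H, <- E. simpl. lra.
Qed.

Lemma mapply_add_scal K x y t a :
  mapply N K (fun i => x i + t * y i) a = mapply N K x a + t * mapply N K y a.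
Proof. unfold mapply. rewrite <- fsum_scal_l, <- fsum_add. apply fsum_ext; intros; ring. Qed.

Lemma mapply_scal K x c a : mapply N K (fun i => c * x i) a = c * mapply N K x a.
Proof. unfold mapply. rewrite <- fsum_scal_l. apply fsum_ext; intros; ring. Qed.

Lemma mapply_ext K x y a : (forall i, (i < N)%nat -> x i = y i) -> mapply N K x a = mapply N K y a.
Proof. intros; apply fsum_ext; intros; rewrite H; auto. Qed.

Lemma nrm2_mapply_ext K x y : (forall i, (i < N)%nat -> x i = y i) ->
  nrm2 N (mapply N K x) = nrm2 N (mapply N K y).
Proof. intros; apply nrm2_ext; intros; apply mapply_ext; auto. Qed.

(* 2 A_ab u_a u_b >= - A_ab (u_a^2 + u_b^2) >= - c (u_a^2 + u_b^2) *)
Lemma dot_mapply_ge_bounded K c u :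
  (forall a b, (a < N)%nat -> (b < N)%nat -> 0 <= K a b <= c) ->
  - (c * INR N) * nrm2 N u <= dot N u (mapply N K u).
Proof.
  intros HK. unfold dot, mapply.
  apply Rle_trans with (fsum N (fun a => fsum N (fun b => - c / 2 * (u a * u a) + - c / 2 * (u b * u b)))).
  - right. unfold nrm2, dot.
    rewrite (fsum_ext N (fun a => fsum N (fun b => _ + _))
      (fun a => INR N * (- c / 2) * (u a * u a) + - c / 2 * fsum N (fun b => u b * u b)))
      by (intros; rewrite fsum_add, fsum_const, fsum_scal_l; ring).
    rewrite fsum_add, fsum_scal_l, fsum_const. lra.
  - apply fsum_le. intros a Ha. rewrite <- fsum_scal_l. apply fsum_le. intros b Hb.
    destruct (HK a b Ha Hb).
    assert (0 <= K a b * ((u a + u b) * (u a + u b))) by (apply Rmult_le_pos; [lra|apply Rle_0_sqr]).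
    assert (0 <= (c - K a b) * (u a * u a + u b * u b)) by (apply Rmult_le_pos; nra).
    nra.
Qed.

End Euclid.

Section SymmetricPowers.
Variables (N : nat) (K : nat -> nat -> R).
Hypothesis K_sym : forall a b, (a < N)%nat -> (b < N)%nat -> K a b = K b a.
Local Notation P := (matpow N K).

Lemma dot_mapply_sym x y : dot N x (mapply N K y) = dot N (mapply N K x) y.
Proof.
  unfold dot, mapply.
  rewrite (fsum_ext N _ (fun i => fsum N (fun j => x i * K i j * y j)))
    by (intros; rewrite <- fsum_scal_l; apply fsum_ext; intros; ring).
  rewrite fsum_swap. apply fsum_ext. intros j Hj. rewrite <- fsum_scal_r.
  apply fsum_ext; intros i Hi. rewrite K_sym by auto. ring.
Qed.

Lemma matpow_add n k a b : (a < N)%nat -> (b < N)%nat -> P (n + k) a b = fsum N (fun l => P n a l * P k l b).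
Proof.
  revert b; induction k; intros b Ha Hb.
  - rewrite Nat.add_0_r. simpl. rewrite fsum_delta_r; auto.
  - rewrite Nat.add_succ_r. simpl.
    rewrite (fsum_ext N _ (fun j => fsum N (fun l => P n a l * P k l j * K j b)))
      by (intros; rewrite IHk, <- fsum_scal_r; auto).
    rewrite fsum_swap. apply fsum_ext. intros l _.
    rewrite <- fsum_scal_l. apply fsum_ext; intros; ring.
Qed.

Lemma matpow_1 a b : (a < N)%nat -> P 1 a b = K a b.
Proof. intros Ha. apply (fsum_delta_l N (fun l => K l b) a Ha). Qed.

Lemma matpow_sym n a b : (a < N)%nat -> (b < N)%nat -> P n a b = P n b a.
Proof.
  revert a b; induction n; intros a b Ha Hb.
  - simpl. rewrite Nat.eqb_sym; auto.
  - change (S n) with (1 + n)%nat. rewrite (matpow_add 1 n b a) by auto. simpl (P (1 + n) a b).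
    apply fsum_ext. intros l Hl. rewrite matpow_1, K_sym, IHn by auto. ring.
Qed.

Lemma mapply_matpow_S n v a : (a < N)%nat ->
  mapply N (P (S n)) v a = mapply N K (mapply N (P n) v) a.
Proof.
  intros Ha. unfold mapply. change (S n) with (1 + n)%nat.
  rewrite (fsum_ext N _ (fun b => fsum N (fun l => P 1 a l * P n l b * v b)))
    by (intros; rewrite matpow_add, <- fsum_scal_r; auto).
  rewrite fsum_swap. apply fsum_ext. intros l Hl. rewrite matpow_1 by auto.
  rewrite <- fsum_scal_l. apply fsum_ext; intros; ring.
Qed.

Lemma qform_matpow_double n v : qform N v (P (n + n)) v = nrm2 N (mapply N (P n) v).
Proof.
  unfold qform, nrm2, dot, mapply.
  rewrite (fsum_ext N _ (fun a => fsum N (fun l => fsum N (fun b => v a * P n a l * (P n l b * v b))))).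
  - rewrite fsum_swap. apply fsum_ext. intros l Hl.
    rewrite (fsum_ext N _ (fun a => v a * P n a l * fsum N (fun b => P n l b * v b)))
      by (intros; rewrite <- fsum_scal_l; reflexivity).
    rewrite fsum_scal_r. f_equal. apply fsum_ext; intros. rewrite matpow_sym by auto. ring.
  - intros a Ha. rewrite fsum_swap. apply fsum_ext. intros b Hb. rewrite matpow_add by auto.
    rewrite <- fsum_scal_l, <- fsum_scal_r. apply fsum_ext; intros; ring.
Qed.

Lemma nrm2_mapply_matpow_le n x : nrm2 N (mapply N (P n) x) <= trace N (P (n + n)) * nrm2 N x.
Proof.
  unfold nrm2 at 1, dot. unfold trace. rewrite <- fsum_scal_r. apply fsum_le. intros a Ha.
  rewrite matpow_add by auto.
  rewrite (fsum_ext N (fun l => P n a l * P n l a) (fun l => P n a l * P n a l))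
    by (intros; rewrite (matpow_sym n _ a); auto).
  generalize (cauchy_schwarz N (P n a) x). unfold nrm2, dot, mapply. simpl. lra.
Qed.

End SymmetricPowers.

Definition nonzero (N : nat) (x : nat -> R) : Prop := exists i, (i < N)%nat /\ x i <> 0.

Definition is_eigvec (N : nat) (K : nat -> nat -> R) (lam : R) (x : nat -> R) : Prop :=
  forall i, (i < N)%nat -> mapply N K x i = lam * x i.

Definition orthogonal_to (N : nat) (P : (nat -> R) -> Prop) (w : nat -> R) : Prop :=
  forall chi, P chi -> dot N chi w = 0.

Definition orthogonal_unit (N : nat) (P : (nat -> R) -> Prop) (w : nat -> R) : Prop :=
  orthogonal_to N P w /\ nrm2 N w = 1.

Section Orthogonal.
Variables (N : nat) (P : (nat -> R) -> Prop).

Lemma orthogonal_to_add_scal w y t :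
  orthogonal_to N P w -> orthogonal_to N P y -> orthogonal_to N P (fun i => w i + t * y i).
Proof. intros Hw Hy chi Hc. rewrite dot_add_scal_r, Hw, Hy by auto. ring. Qed.

Lemma orthogonal_to_scal w c : orthogonal_to N P w -> orthogonal_to N P (fun i => c * w i).
Proof. intros Hw chi Hc. rewrite dot_scal_r, Hw by auto. ring. Qed.

End Orthogonal.

(** * Compactness of unit spheres *)

From mathcomp Require all_boot all_order all_algebra.
From mathcomp Require boolp classical_sets topology normedtype derive.
From mathcomp Require Rstruct Rstruct_topology.

Module ExtremeValue.
Import all_boot all_order all_algebra.
Import boolp classical_sets topology normedtype derive.
Import Rstruct Rstruct_topology.

Set Implicit Arguments.
Unset Strict Implicit.
Unset Printing Implicit Defensive.

Local Open Scope classical_set_scope.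
Local Open Scope ring_scope.

Section RowVectors.
Variable n : nat.
Local Notation V := 'rV[R]_n.+1.

Definition coords (c : V) : nat -> R := fun i => c ord0 (inord i).

Lemma coords_row (w : nat -> R) i : (i < n.+1)%coq_nat -> coords (\row_j w (nat_of_ord j) : V) i = w i.
Proof. by move=> /ltP Hi; rewrite /coords mxE inordK. Qed.

Lemma continuous_fsum m (F : nat -> V -> R) :
  (forall i, continuous (F i)) -> continuous (fun c => fsum m (fun i => F i c)).
Proof.
move=> HF; elim: m => [|m IH] /=; first exact: cst_continuous.
by move=> x; apply: (@continuousD R R^o _ _ _ x (IH x) (HF m x)).
Qed.

Lemma continuous_mul (f g : V -> R) :
  continuous f -> continuous g -> continuous (fun c => Rmult (f c) (g c)).
Proof. by move=> cf cg x; apply: (@continuousM R _ f g x (cf x) (cg x)). Qed.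

Lemma continuous_coords i : continuous (fun c : V => coords c i).
Proof. by move=> x; apply: (@coord_continuous R 1 n.+1 ord0 (inord i) x). Qed.

Lemma continuous_dot (chi : nat -> R) : continuous (fun c => dot n.+1 chi (coords c)).
Proof. by apply: continuous_fsum => i; apply: continuous_mul; [exact: cst_continuous|exact: continuous_coords]. Qed.

Lemma continuous_nrm2 : continuous (fun c => nrm2 n.+1 (coords c)).
Proof. by apply: continuous_fsum => i; apply: continuous_mul; exact: continuous_coords. Qed.

Lemma continuous_nrm2_mapply (K : nat -> nat -> R) : continuous (fun c => nrm2 n.+1 (mapply n.+1 K (coords c))).
Proof.
have ca a : continuous (fun c => mapply n.+1 K (coords c) a).
  by apply: continuous_fsum => i; apply: continuous_mul; [exact: cst_continuous|exact: continuous_coords].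
by apply: continuous_fsum => i; exact: continuous_mul.
Qed.

End RowVectors.

(* In coordinates, the unit vectors orthogonal to P form a closed subset of the cube [-1, 1]^N. *)
Lemma exists_max_nrm2_mapply N K (P : (nat -> R) -> Prop) :
  (exists w, orthogonal_unit N P w) ->
  exists w2, orthogonal_unit N P w2 /\
    forall w, orthogonal_unit N P w -> Rle (nrm2 N (mapply N K w)) (nrm2 N (mapply N K w2)).
Proof.
case: N => [|n] [w [Hw Hw1]]; first by move: Hw1; rewrite /nrm2 /dot /=; lra.
have agree (c : 'rV[R]_n.+1) (w' : nat -> R) : (forall i, (i < n.+1)%coq_nat -> coords c i = w' i) ->
   (orthogonal_unit n.+1 P (coords c) <-> orthogonal_unit n.+1 P w') /\
   nrm2 n.+1 (mapply n.+1 K (coords c)) = nrm2 n.+1 (mapply n.+1 K w').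
  move=> H; split; last exact: nrm2_mapply_ext.
  rewrite /orthogonal_unit (nrm2_ext _ _ _ H).
  by split=> -[HW ->]; split=> // chi Hc; rewrite -(HW chi Hc); apply: dot_ext => // i Hi; rewrite H.
pose A := [set c : 'rV[R]_n.+1 | orthogonal_unit n.+1 P (coords c)].
have A0 : A !=set0.
  by exists (\row_j w (nat_of_ord j)); apply/(proj1 (agree _ _ (coords_row w))).
have cA : compact A.
  apply: (@subclosed_compact _ A [set v : 'rV[R]_n.+1 | forall i, `[Ropp R1, R1]%classic (v ord0 i)]).
  - have -> : A = (\bigcap_(chi in P) ((fun c => dot n.+1 chi (coords c)) @^-1` [set R0])) `&`
        ((fun c => nrm2 n.+1 (coords c)) @^-1` [set R1]).
      by rewrite /A; apply/seteqP; split => c /= [H1 H2]; split => //; move=> chi Hc; exact: H1.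
    apply: closedI.
    + apply: closed_bigI => chi _; apply: preimage_closed; last exact: closed_eq.
      by move=> x _; exact: continuous_dot.
    + by apply: preimage_closed; last exact: closed_eq; move=> x _; exact: continuous_nrm2.
  - exact: (@rV_compact R n.+1 (fun _ => `[Ropp R1, R1]%classic) (fun _ => @segment_compact _ (Ropp R1) R1)).
  - move=> c [_ Hc] i /=; rewrite in_itv /=.
    have /(nrm2_eq1_coord_bounds _ _ _ Hc) : (i < n.+1)%coq_nat by apply/ltP.
    by rewrite /coords inord_val => -[H1 H2]; apply/andP; split; apply/RleP.
have cf : {within A, continuous (fun c => nrm2 n.+1 (mapply n.+1 K (coords c)))}.
  by apply: continuous_subspaceT; exact: continuous_nrm2_mapply.
have [c Ac Hmax] := EVT_max_rV A0 cA cf.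
move: Ac; rewrite inE => Ac.
exists (coords c); split => // w' Hw'.
have [H1 H2] := agree _ _ (coords_row w').
by rewrite -H2; apply/RleP; apply: Hmax; rewrite inE; apply/H1.
Qed.

End ExtremeValue.

(** * Overlap with the top eigenspace *)

Lemma linear_dominated_by_quadratic a b :
  0 <= b -> (forall t, 0 <= t * a + t ^ 2 * b) -> a = 0.
Proof.
  intros Hb H. specialize (H (- a / (b + 1))).
  replace (- a / (b + 1) * a + (- a / (b + 1)) ^ 2 * b) with (- (a / (b + 1)) ^ 2) in H by (field; lra).
  assert (Hq : a / (b + 1) = 0) by nra.
  unfold Rdiv in Hq. apply Rmult_integral in Hq as [|Hq]; auto.
  exfalso. apply (Rinv_neq_0_compat (b + 1)); lra.
Qed.

Lemma geometric_domination_false lam nu c :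
  0 <= nu < lam -> (forall n, lam ^ n <= c * nu ^ n) -> False.
Proof.
  intros Hnu H. set (q := nu / lam).
  assert (Hq : 0 <= q < 1).
  { unfold q. split; [apply Rmult_le_pos; [lra|left; apply Rinv_0_lt_compat; lra]|].
    apply (Rmult_lt_reg_r lam); [lra|]. unfold Rdiv. rewrite Rmult_assoc, Rinv_l, Rmult_1_r; lra. }
  assert (Hc : 0 < c) by (specialize (H 0%nat); simpl in H; lra).
  assert (Hdom : forall n, 1 <= c * q ^ n).
  { intros n. apply (Rmult_le_reg_r (lam ^ n)); [apply pow_lt; lra|].
    rewrite Rmult_1_l, Rmult_assoc, <- Rpow_mult_distr.
    replace (q * lam) with nu by (unfold q; field; lra). apply H. }
  destruct (pow_lt_1_zero q ltac:(rewrite Rabs_right; lra) (/ c) ltac:(apply Rinv_0_lt_compat; lra))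
    as [M HM].
  specialize (HM M (le_n M)). rewrite Rabs_right in HM by (apply Rle_ge, pow_le; lra).
  specialize (Hdom M). apply (Rmult_lt_compat_l c) in HM; [|lra]. rewrite Rinv_r in HM; lra.
Qed.

Lemma mapply_matpow_eigvec N K lam x n :
  is_eigvec N K lam x -> forall i, (i < N)%nat -> mapply N (matpow N K n) x i = lam ^ n * x i.
Proof.
  intros Hx. induction n; intros i Hi.
  - unfold mapply. simpl. rewrite fsum_delta_l; auto. ring.
  - unfold mapply in *. simpl.
    rewrite (fsum_ext N _ (fun b => fsum N (fun l => matpow N K n i l * K l b * x b)))
      by (intros; rewrite <- fsum_scal_r; reflexivity).
    rewrite fsum_swap.
    rewrite (fsum_ext N _ (fun l => matpow N K n i l * (lam * x l)))
      by (intros; rewrite <- Hx by auto; unfold mapply; rewrite <- fsum_scal_l; apply fsum_ext; intros; ring).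
    rewrite (fsum_ext N _ (fun l => lam * (matpow N K n i l * x l))) by (intros; ring).
    rewrite fsum_scal_l, IHn by auto. ring.
Qed.

Section Spectral.
Variables (N : nat) (K : nat -> nat -> R) (mu : R).
Hypothesis K_sym : forall a b, (a < N)%nat -> (b < N)%nat -> K a b = K b a.
Local Notation Eig := (is_eigvec N K mu).
Local Notation Orth := (orthogonal_to N Eig).

Lemma orthogonal_eigvec_mapply w : Orth w -> Orth (mapply N K w).
Proof.
  intros Hw chi Hc. rewrite dot_mapply_sym by auto.
  rewrite (dot_ext N _ w (fun i => mu * chi i) w), dot_scal_l, Hw by auto. ring.
Qed.

Lemma orthogonal_eigvec_matpow w n : Orth w -> Orth (mapply N (matpow N K n) w).
Proof.
  intros Hw. induction n.
  - intros chi Hc. rewrite <- (Hw chi Hc). apply dot_ext; auto.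
    intros; unfold mapply; simpl; rewrite fsum_delta_l; auto; ring.
  - intros chi Hc. rewrite <- (orthogonal_eigvec_mapply _ IHn chi Hc).
    apply dot_ext; auto. intros; apply mapply_matpow_S; auto.
Qed.

Lemma eigval_pow_sq_le_trace chi n : nonzero N chi -> Eig chi ->
  mu ^ n * mu ^ n <= trace N (matpow N K (n + n)).
Proof.
  intros Hnz Hchi. assert (Hpos := nrm2_pos N chi Hnz).
  assert (H := nrm2_mapply_matpow_le N K K_sym n chi).
  rewrite (nrm2_ext N _ (fun i => mu ^ n * chi i)), nrm2_scal in H
    by (intros; apply mapply_matpow_eigvec; auto).
  apply (Rmult_le_reg_r (nrm2 N chi)); auto. simpl in H. lra.
Qed.

Section MaxVector.
Variable w2 : nat -> R.
Hypothesis w2_unit : orthogonal_unit N Eig w2.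
Hypothesis w2_max : forall w, orthogonal_unit N Eig w -> nrm2 N (mapply N K w) <= nrm2 N (mapply N K w2).
Let nu := nrm2 N (mapply N K w2).

Lemma nrm2_mapply_le_max w : Orth w -> nrm2 N (mapply N K w) <= nu * nrm2 N w.
Proof.
  intros Hw. destruct (Rle_lt_or_eq_dec _ _ (nrm2_nonneg N w)) as [Hp|E].
  - set (s := sqrt (nrm2 N w)). assert (Hs : 0 < s) by (apply sqrt_lt_R0; auto).
    assert (Hss : s * s = nrm2 N w) by (apply sqrt_sqrt; lra).
    assert (H := w2_max (fun i => / s * w i)).
    rewrite (nrm2_ext N (mapply N K (fun i => / s * w i)) (fun i => / s * mapply N K w i)),
      !nrm2_scal in H by (intros; apply mapply_scal).
    replace ((/ s) ^ 2) with (/ nrm2 N w) in H by (rewrite <- Hss; field; lra).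
    assert (/ nrm2 N w * nrm2 N (mapply N K w) <= nu) as Hle.
    { apply H. split; [apply orthogonal_to_scal; auto|]. rewrite nrm2_scal, <- Hss. field. lra. }
    apply (Rmult_le_compat_l (nrm2 N w)) in Hle; [|lra].
    rewrite <- Rmult_assoc, Rinv_r, Rmult_1_l in Hle by lra. lra.
  - rewrite <- E, Rmult_0_r. right. apply fsum_zero. intros i Hi.
    assert (mapply N K w i = 0) as ->; [|ring].
    apply fsum_zero; intros; rewrite (nrm2_eq0 N w) by auto; ring.
Qed.

(* First variation of |K w|^2 / |w|^2 at its maximizer w2 within Orth. *)
Lemma mapply_mapply_max i : (i < N)%nat -> mapply N K (mapply N K w2) i = nu * w2 i.
Proof.
  destruct w2_unit as [Hw2 Hn2].
  set (B := fun i => nu * w2 i + (-1) * mapply N K (mapply N K w2) i).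
  assert (HB : Orth B).
  { apply orthogonal_to_add_scal; [apply orthogonal_to_scal; auto|].
    apply orthogonal_eigvec_mapply, orthogonal_eigvec_mapply; auto. }
  assert (HBnrm : nu * dot N w2 B = nrm2 N B + dot N (mapply N K w2) (mapply N K B)).
  { rewrite dot_mapply_sym by auto. unfold nrm2, dot.
    rewrite <- fsum_scal_l, <- fsum_add. apply fsum_ext. intros. unfold B. ring. }
  assert (Hquad : forall t, 0 <= t * (2 * nrm2 N B) + t ^ 2 * (nu * nrm2 N B - nrm2 N (mapply N K B))).
  { intros t. assert (Hx := nrm2_mapply_le_max _ (orthogonal_to_add_scal N Eig w2 B t Hw2 HB)).
    rewrite (nrm2_ext N _ (fun a => mapply N K w2 a + t * mapply N K B a)), !nrm2_add_scal, Hn2 in Hx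
      by (intros; apply mapply_add_scal).
    fold nu in Hx. nra. }
  apply linear_dominated_by_quadratic in Hquad; [|generalize (nrm2_mapply_le_max B HB); lra].
  intros Hi. assert (B i = 0) by (apply (nrm2_eq0 N B); auto; lra). unfold B in H. lra.
Qed.

Hypothesis eigval_range : forall th u, nonzero N u -> is_eigvec N K th u -> 0 < th <= mu.

Lemma max_lt_eigval_sq : nu < mu * mu.
Proof.
  destruct w2_unit as [Hw2 Hn2].
  set (rho := sqrt nu). assert (Hrho0 : 0 <= rho) by apply sqrt_pos.
  assert (Hrr : rho * rho = nu) by (apply sqrt_sqrt, nrm2_nonneg).
  set (u := fun i => mapply N K w2 i + rho * w2 i).
  assert (Hu : is_eigvec N K rho u).
  { intros i Hi. unfold u. rewrite mapply_add_scal, mapply_mapply_max by auto. rewrite <- Hrr. ring. }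
  destruct (classic (nonzero N u)) as [Hnz|Hz].
  - assert (rho < mu); [|nra].
    destruct (eigval_range rho u Hnz Hu) as [_ [Hlt|Heq]]; auto. exfalso.
    assert (HuOrth : Orth u) by (apply orthogonal_to_add_scal; [apply orthogonal_eigvec_mapply|]; auto).
    assert (Hd : dot N u u = 0) by (apply HuOrth; rewrite <- Heq; auto).
    destruct Hnz as [i [Hi Hui]]. apply Hui. apply (nrm2_eq0 N u); auto.
  - exfalso. assert (Hw : is_eigvec N K (- rho) w2).
    { intros i Hi. destruct (Req_dec (u i) 0) as [E|E]; [unfold u in E; lra|].
      exfalso; apply Hz; exists i; auto. }
    destruct (eigval_range (- rho) w2 (nrm2_eq1_nonzero N w2 Hn2) Hw). lra.
Qed.

Lemma nrm2_matpow_le_max v n : Orth v -> nrm2 N (mapply N (matpow N K n) v) <= nu ^ n * nrm2 N v.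
Proof.
  intros Hv. induction n; simpl.
  - rewrite Rmult_1_l. right. apply nrm2_ext. intros; unfold mapply; simpl; rewrite fsum_delta_l; auto; ring.
  - rewrite (nrm2_ext N _ (mapply N K (mapply N (matpow N K n) v))) by (intros; apply mapply_matpow_S; auto).
    eapply Rle_trans; [apply nrm2_mapply_le_max, orthogonal_eigvec_matpow; auto|].
    rewrite Rmult_assoc. apply Rmult_le_compat_l; auto. apply nrm2_nonneg.
Qed.

End MaxVector.

(* Otherwise <v|K^(2n)|v> would grow like nu^n with nu < mu^2, the maximum of
   |K w|^2 on the unit sphere orthogonal to the top eigenspace, while
   tr K^(2n) >= mu^(2n). *)
Theorem top_eigvec_overlap C v :
  0 <= C -> nonzero N v ->
  (forall n, trace N (matpow N K (n + n)) <= C * qform N v (matpow N K (n + n)) v) ->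
  (forall th u, nonzero N u -> is_eigvec N K th u -> 0 < th <= mu) ->
  (exists chi0, nonzero N chi0 /\ Eig chi0) ->
  exists chi, Eig chi /\ dot N chi v <> 0.
Proof.
  intros HC Hv Htr Heig [chi0 [Hnz0 Hchi0]]. apply NNPP. intros Hn.
  assert (HvOrth : Orth v) by (intros chi Hc; apply NNPP; intros Hd; apply Hn; eauto).
  assert (Hnv := nrm2_pos N v Hv).
  destruct (@ExtremeValue.exists_max_nrm2_mapply N K Eig) as [w2 [Hw2 Hmax]].
  { exists (fun i => / sqrt (nrm2 N v) * v i). split; [apply orthogonal_to_scal; auto|].
    rewrite nrm2_scal. assert (0 < sqrt (nrm2 N v)) by (apply sqrt_lt_R0; auto).
    replace ((/ sqrt (nrm2 N v)) ^ 2) with (/ (sqrt (nrm2 N v) * sqrt (nrm2 N v))) by (field; lra).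
    rewrite sqrt_sqrt by lra. field. lra. }
  apply (geometric_domination_false (mu * mu) (nrm2 N (mapply N K w2)) (C * nrm2 N v)).
  - split; [apply nrm2_nonneg|apply max_lt_eigval_sq; auto].
  - intros n. rewrite Rpow_mult_distr.
    eapply Rle_trans; [apply (eigval_pow_sq_le_trace chi0 n); auto|].
    eapply Rle_trans; [apply Htr|]. rewrite qform_matpow_double by auto.
    rewrite Rmult_assoc, (Rmult_comm (nrm2 N v)). apply Rmult_le_compat_l; auto.
    apply nrm2_matpow_le_max; auto.
Qed.

End Spectral.

(** * The ground state *)

Section GroundState.
Variables twoS L : nat.
Hypothesis twoS_pos : (1 <= twoS)%nat.
Local Notation d := (ldim twoS).
Local Notation N := (hdim twoS L).
Local Notation G := (gauge_sign twoS L).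
Local Notation Hm := (Ham twoS L).

Lemma mapply_Ham_gauge phi i :
  mapply N Hm phi i = - G i * mapply N (hopping twoS L 0) (fun j => G j * phi j) i.
Proof.
  unfold mapply. rewrite <- fsum_scal_l. apply fsum_ext; intros j _. rewrite Ham_gauge by auto. ring.
Qed.

Lemma mapply_hopping_shift r u i : (i < N)%nat ->
  mapply N (hopping twoS L r) u i = mapply N (hopping twoS L 0) u i + INR r * u i.
Proof.
  intros Hi. unfold mapply.
  rewrite (fsum_ext N _ (fun j => hopping twoS L 0 i j * u j + INR r * (ind (i =? j)%nat * u j)))
    by (intros; rewrite (hopping_shift twoS L r); ring).
  rewrite fsum_add, fsum_scal_l, fsum_delta_l; auto.
Qed.

Lemma nonzero_gauge u : nonzero N u -> nonzero N (fun j => G j * u j).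
Proof.
  intros [i [Hi Hu]]. exists i. split; auto.
  intros E. apply Rmult_integral in E as [E|E]; [apply (gauge_sign_neq0 twoS L i)|]; auto.
Qed.

Lemma eigvec_hopping_Ham r th u : is_eigvec N (hopping twoS L r) th u ->
  is_eigvec N Hm (INR r - th) (fun j => G j * u j).
Proof.
  intros Hu i Hi. rewrite mapply_Ham_gauge.
  rewrite (mapply_ext N _ _ u) by (intros; rewrite <- Rmult_assoc, gauge_sign_mul_diag by auto; ring).
  assert (mapply N (hopping twoS L 0) u i = th * u i - INR r * u i)
    by (generalize (Hu i Hi); rewrite mapply_hopping_shift by auto; lra).
  rewrite H. ring.
Qed.

Lemma eigvec_Ham_hopping r E phi : is_eigvec N Hm E phi ->
  is_eigvec N (hopping twoS L r) (INR r - E) (fun j => G j * phi j).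
Proof.
  intros Hphi i Hi. rewrite mapply_hopping_shift by auto.
  assert (H := Hphi i Hi). rewrite mapply_Ham_gauge in H.
  apply (Rmult_eq_reg_l (- G i)); [|generalize (gauge_sign_neq0 twoS L i); lra].
  rewrite Rmult_plus_distr_l, H.
  replace (E * phi i) with (E * phi i * (G i * G i)) by (rewrite gauge_sign_mul_diag; ring).
  ring.
Qed.

Lemma eigval_hopping_pos r th u : ((2 * L - 1) * N < r)%nat -> nonzero N u ->
  is_eigvec N (hopping twoS L r) th u -> 0 < th.
Proof.
  intros Hr Hnz Hu.
  assert (Hq := dot_mapply_ge_bounded N (hopping twoS L 0) (INR (2 * L - 1)) u
                  (fun a b _ _ => hopping_bounds twoS L a b)).
  assert (Heq : dot N u (mapply N (hopping twoS L 0) u) = (th - INR r) * nrm2 N u).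
  { unfold nrm2, dot. rewrite <- fsum_scal_l. apply fsum_ext; intros i Hi.
    assert (mapply N (hopping twoS L 0) u i = th * u i - INR r * u i)
      by (generalize (Hu i Hi); rewrite mapply_hopping_shift by auto; lra).
    rewrite H. ring. }
  assert (Hpos := nrm2_pos N u Hnz).
  assert (INR ((2 * L - 1) * N) + 1 <= INR r) by (rewrite <- S_INR; apply le_INR; lia).
  rewrite mult_INR in H. rewrite Heq in Hq.
  assert (- (INR (2 * L - 1) * INR N) <= th - INR r) by (apply (Rmult_le_reg_r (nrm2 N u)); lra).
  lra.
Qed.

Lemma dimer_support_nonzero : nonzero N (dimer_support twoS L).
Proof.
  exists (shift twoS L 0 0). split; [apply shift_lt; auto|].
  rewrite dimer_support_shift by auto. lra.
Qed.

Theorem ground_state_dimer_overlap E0 : is_ground_energy N Hm E0 ->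
  exists psi, is_eigvec N Hm E0 psi /\ fsum N (fun a => psi a * Dvec twoS L a) <> 0.
Proof.
  intros [[phi0 [Hnz0 Hphi0]] Hmin].
  set (r := ((2 * L - 1) * N + 1)%nat).
  destruct (top_eigvec_overlap N (hopping twoS L r) (INR r - E0) (fun a b _ _ => hopping_sym twoS L r a b)
              (INR (d ^ L)) (dimer_support twoS L)) as [chi [Hchi Hdot]].
  - apply pos_INR.
  - apply dimer_support_nonzero.
  - intros n. apply trace_le_dimer_form; auto.
  - intros th u Hnz Hu. split; [apply (eigval_hopping_pos r th u); auto; lia|].
    assert (E0 <= INR r - th); [|lra].
    apply (Hmin _ _ (nonzero_gauge u Hnz) (eigvec_hopping_Ham r th u Hu)).
  - exists (fun j => G j * phi0 j). split; [apply nonzero_gauge; auto|].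
    apply eigvec_Ham_hopping; auto.
  - exists (fun j => G j * chi j). split.
    + replace E0 with (INR r - (INR r - E0)) by ring. apply eigvec_hopping_Ham; auto.
    + rewrite (fsum_ext N _ (fun a => chi a * dimer_support twoS L a)); auto.
      intros a _. rewrite Dvec_gauge.
      transitivity (chi a * dimer_support twoS L a * (G a * G a)); [ring|].
      rewrite gauge_sign_mul_diag by auto. ring.
Qed.

End GroundState.

Theorem mainTheorem15 (twoS L : nat) (beta : R) (E : nat -> nat -> R) :
  (1 <= twoS)%nat -> 0 < beta ->
  is_mexp (hdim twoS L) (fun a b => - beta * Ham twoS L a b) E ->
  fsum (hdim twoS L) (fun a => fsum (hdim twoS L)
          (fun b => Dvec twoS L a * E a b * Dvec twoS L b))
    / fsum (hdim twoS L) (fun a => E a a)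
  >= / (INR (ldim twoS) ^ L)
  /\
  (forall E0 : R, is_ground_energy (hdim twoS L) (Ham twoS L) E0 ->
     exists psi : nat -> R,
       (forall i, (i < hdim twoS L)%nat -> mapply (hdim twoS L) (Ham twoS L) psi i = E0 * psi i)
       /\ fsum (hdim twoS L) (fun a => psi a * Dvec twoS L a) <> 0).
Proof.
  intros twoS_pos beta_pos HE. split.
  - exact (thermal_dimer_weight_ge twoS L twoS_pos beta beta_pos E HE).
  - exact (ground_state_dimer_overlap twoS L twoS_pos).
Qed.
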